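(* Let $\Omega\subset\mathbb R^d$ be a bounded open set, $L>0$, $n\in\mathbb Z_+$, $X=\overline\Omega\times[-L,L]^n$, $\varepsilon>0$, $N\in\mathbb N$, and points $\bar x_1,\dots,\bar x_N\in\Omega$. Suppose $G_n,G:\mathcal P(X)\to\mathcal P(X)$ satisfy $\lim_{n\to\infty}W_1(G_n(\mu),G(\mu))=0$ for all $\mu\in\mathcal P(X)$. Then for each $h\in C(\overline\Omega;[-L,L]^n)$, $$\mathbf F_\varepsilon\circ G\circ\mathbf M_N(h)=\lim_{n\to\infty}\mathbf F_\varepsilon\circ G_n\circ\mathbf M_N(h),$$ with convergence in $C(\overline\Omega;\mathbb R^n)$ (hence also in $H^{-s}(\Omega;\mathbb R^n)$ for every $s\ge0$). The same holds with $(G_n)_n$ replaced by a family $(G_\eta)_{\eta>0}$ and $n\to\infty$ replaced by $\eta\to0$.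
   Context: $\mathcal P(X)$: Borel probability measures with the $W_1$ metric. $\mathbf M_N(h)=\frac1N\sum_{j=1}^N\delta_{(\bar x_j,h(\bar x_j))}$. With $\rho\in C_c^\infty(\mathbb R^d)$ a mollifier ($\int\rho=1$, $\mathrm{supp}\,\rho\subset B(0,1)$, $\rho$ even), $(\mathbf F_\varepsilon\gamma)(x)=\frac{\mathrm{vol}(\Omega)}{\varepsilon^d}\int_X\rho(\frac{x'-x}{\varepsilon})\,y'\,d\gamma(x',y')$, $x\in\overline\Omega$. *)

From HB Require Import structures.
From mathcomp Require Import all_boot all_order all_algebra.
From mathcomp Require Import all_classical all_reals all_analysis.
Set Implicit Arguments. Unset Strict Implicit. Unset Printing Implicit Defensive.
Import Order.TTheory GRing.Theory Num.Theory.
Import numFieldNormedType.Exports.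
Local Open Scope classical_set_scope.
Local Open Scope ring_scope.

Definition BorelT (T : topologicalType) := g_sigma_algebraType (@open T).

Definition Amb (R : realType) (d n : nat) :=
  BorelT ('rV[R]_d * 'rV[R]_n)%type.

Definition eucl2 (R : realType) (k : nat) (v : 'rV[R]_k) : R :=
  \sum_(i < k) v ord0 i ^+ 2.

Definition edist (R : realType) (d n : nat) (z w : Amb R d n) : R :=
  Num.sqrt (eucl2 (z.1 - w.1) + eucl2 (z.2 - w.2)).

Definition Xset (R : realType) (d n : nat) (Om : set 'rV[R]_d) (L : R)
  : set (Amb R d n) :=
  [set z : Amb R d n | closure Om (z : 'rV[R]_d * 'rV[R]_n).1 /\
     forall i : 'I_n, - L <= (z : 'rV[R]_d * 'rV[R]_n).2 ord0 i <= L].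

Arguments Xset {R d} n Om L.

(* P(X): Borel probability measures on the ambient space concentrated on X. *)
Definition PX (R : realType) (d n : nat) (Om : set 'rV[R]_d) (L : R) :=
  {mu : probability (Amb R d n) R | mu (~` Xset n Om L) = 0%E}.

Definition coupling (R : realType) (d n : nat) (mu nu : probability (Amb R d n) R)
  (pi : probability (Amb R d n * Amb R d n)%type R) : Prop :=
  (forall A, measurable A -> pi (A `*` setT) = mu A) /\
  (forall B, measurable B -> pi (setT `*` B) = nu B).

Definition W1 (R : realType) (d n : nat) (mu nu : probability (Amb R d n) R)
  : \bar R :=
  ereal_inf [set c | exists pi : probability (Amb R d n * Amb R d n)%type R,
     coupling mu nu pi /\ c = (\int[pi]_z (edist z.1 z.2)%:E)%E].

Definition is_empirical (R : realType) (d n N : nat) (xbar : 'I_N -> 'rV[R]_d)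
  (h : 'rV[R]_d -> 'rV[R]_n) (mu : probability (Amb R d n) R) : Prop :=
  forall A : set (Amb R d n), measurable A ->
    mu A = ((N%:R)^-1%:E * \sum_(j < N) \d_((xbar j, h (xbar j)) : Amb R d n) A)%E.

Fixpoint iter_dir (R : realType) (V : normedModType R) (vs : seq V)
  (f : V -> R) : V -> R :=
  match vs with
  | [::] => f
  | v :: vs' => fun x => derive (iter_dir vs' f) x v
  end.

Definition smooth (R : realType) (V : normedModType R) (f : V -> R) : Prop :=
  forall vs : seq V, continuous (iter_dir vs f) /\
    forall (x v : V), derivable (iter_dir vs f) x v.

Definition is_lebesgue (R : realType) (d : nat)
  (lam : {measure set (BorelT 'rV[R]_d) -> \bar R}) : Prop :=
  forall a b : 'I_d -> R, (forall i, a i <= b i) ->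
    lam [set x | forall i, a i <= x ord0 i <= b i] = (\prod_(i < d) (b i - a i))%:E.

Definition mollifier (R : realType) (d : nat)
  (lam : {measure set (BorelT 'rV[R]_d) -> \bar R}) (rho : 'rV[R]_d -> R) : Prop :=
  smooth rho /\
  compact (closure [set x | rho x != 0]) /\
  (\int[lam]_x (rho x)%:E = 1)%E /\
  closure [set x | rho x != 0] `<=` [set x | eucl2 x < 1] /\
  (forall x, rho (- x) = rho x).

Definition Feps (R : realType) (d n : nat)
  (lam : {measure set (BorelT 'rV[R]_d) -> \bar R}) (Om : set 'rV[R]_d) (L : R)
  (rho : 'rV[R]_d -> R) (eps : R) (gam : probability (Amb R d n) R)
  (x : 'rV[R]_d) : 'rV[R]_n :=
  \row_i (fine (lam Om) / eps ^+ d *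
          Rintegral gam (Xset n Om L)
            (fun z => rho (eps^-1 *: (z.1 - x)) * z.2 ord0 i)).

From Pilot Require Import Defs.
From HB Require Import structures.
From mathcomp Require Import all_boot all_order all_algebra.
From mathcomp Require Import all_classical all_reals all_analysis.
From mathcomp Require Import measurable_realfun.
From mathcomp Require Import ring lra.
Import Order.TTheory GRing.Theory Num.Theory.
Import numFieldNormedType.Exports.
Local Open Scope classical_set_scope.
Local Open Scope ring_scope.

(* F_eps is uniformly continuous from (P(X), W_1) to C(closure Omega; R^n),
   so convergence G_k(mu) -> G(mu) in W_1 at mu = M_N(h) is all that is
   used; nothing specific to the empirical measure is needed.  Each
   coordinate of F_eps gamma (x) is vol(Omega)/eps^d times the integral
   against gamma of g(x', y') = rho((x' - x)/eps) y'_i.  On X, g is bounded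
   and, rho being uniformly continuous with compact support, it satisfies
   |g z - g w| <= a + b |z - w| with a arbitrarily small and b independent
   of x.  Integrating this bound against a coupling of mu and nu whose cost
   is close to W_1(mu, nu) bounds the difference of the integrals by
   a + b W_1(mu, nu). *)

Lemma rV_norm_le {K : realDomainType} {k : nat} (v : 'rV[K]_k) (c : K) :
  0 <= c -> (forall j, `|v ord0 j| <= c) -> `|v| <= c.
Proof.
move=> c0 vc; rewrite [leLHS]/Num.norm /= mx_normrE; apply/bigmax_leP; split => //.
by move=> [i j] _ /=; rewrite (ord1 i).
Qed.

Lemma rV_norm_lt {K : realDomainType} {k : nat} (v : 'rV[K]_k) (c : K) :
  0 < c -> (forall j, `|v ord0 j| < c) -> `|v| < c.
Proof.
move=> c0 vc; rewrite [ltLHS]/Num.norm /= mx_normrE; apply/bigmax_ltP; split => //.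
by move=> [i j] _ /=; rewrite (ord1 i).
Qed.

Section product_coordinates.
Context {R : realType} {d n : nat}.

Lemma continuous_Amb_measurable {f : 'rV[R]_d * 'rV[R]_n -> R} :
  continuous f -> measurable_fun [set: Amb R d n] f.
Proof.
move=> /continuousP cf.
apply: (measurability _ (RGenOpens.measurableE R)) => _ [_ [a [b ->]] <-].
by apply: sub_sigma_algebra; rewrite setTI; apply: cf; exact: interval_open.
Qed.

Lemma closed_Amb_measurable (A : set ('rV[R]_d * 'rV[R]_n)) :
  closed A -> measurable (A : set (Amb R d n)).
Proof.
move=> cA; rewrite -(setCK A); apply: measurableC.
by apply: sub_sigma_algebra; exact: closed_openC.
Qed.

Lemma continuous_fst_coord (i : 'I_d) :
  continuous (fun z : 'rV[R]_d * 'rV[R]_n => z.1 ord0 i).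
Proof.
by move=> z; apply: (@continuous_comp _ _ _ fst (fun v : 'rV[R]_d => v ord0 i));
  [exact: cvg_fst|exact: coord_continuous].
Qed.

Lemma continuous_snd_coord (i : 'I_n) :
  continuous (fun z : 'rV[R]_d * 'rV[R]_n => z.2 ord0 i).
Proof.
by move=> z; apply: (@continuous_comp _ _ _ snd (fun v : 'rV[R]_n => v ord0 i));
  [exact: cvg_snd|exact: coord_continuous].
Qed.

Lemma closed_Xset (Om : set 'rV[R]_d) (L : R) :
  closed (Xset n Om L : set ('rV[R]_d * 'rV[R]_n)).
Proof.
have -> : Xset n Om L = fst @^-1` closure Om `&`
    \bigcap_(i in setT) (fun z : 'rV[R]_d * 'rV[R]_n => z.2 ord0 i) @^-1` `[- L, L].
  apply/seteqP; split => z /= [Oz Lz]; split=> // i.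
    by move=> _; rewrite /= in_itv; exact: Lz.
  by have := Lz i I; rewrite /= in_itv.
apply: closedI.
  by apply: closed_comp; [move=> z _; exact: cvg_fst|exact: closed_closure].
apply: closed_bigI => i _; apply: closed_comp; last exact: itv_closed.
by move=> z _; exact: continuous_snd_coord.
Qed.

Lemma measurable_Xset (Om : set 'rV[R]_d) (L : R) :
  measurable (Xset n Om L : set (Amb R d n)).
Proof. by apply: closed_Amb_measurable; exact: closed_Xset. Qed.

Lemma edist_ge0 (z w : Amb R d n) : 0 <= Defs.edist z w.
Proof. exact: sqrtr_ge0. Qed.

Lemma measurable_edist :
  measurable_fun [set: Amb R d n * Amb R d n] (fun z => Defs.edist z.1 z.2).
Proof.
have m1 i : measurable_fun [set: Amb R d n] (fun w => w.1 ord0 i).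
  by apply: continuous_Amb_measurable; exact: continuous_fst_coord.
have m2 i : measurable_fun [set: Amb R d n] (fun w => w.2 ord0 i).
  by apply: continuous_Amb_measurable; exact: continuous_snd_coord.
have m11 i := measurableT_comp (m1 i) (@measurable_fst _ _ _ (Amb R d n)).
have m21 i := measurableT_comp (m1 i) (@measurable_snd _ _ (Amb R d n) _).
have m12 i := measurableT_comp (m2 i) (@measurable_fst _ _ _ (Amb R d n)).
have m22 i := measurableT_comp (m2 i) (@measurable_snd _ _ (Amb R d n) _).
have -> : (fun z : Amb R d n * Amb R d n => Defs.edist z.1 z.2) = Num.sqrt \o
    (fun z : Amb R d n * Amb R d n => \sum_(i < d) (z.1.1 ord0 i - z.2.1 ord0 i) ^+ 2 +
              \sum_(i < n) (z.1.2 ord0 i - z.2.2 ord0 i) ^+ 2).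
  by apply/funext => z; rewrite /Defs.edist /eucl2 /=; congr (Num.sqrt (_ + _));
    apply: eq_bigr => i _; rewrite !mxE.
apply: measurableT_comp; first exact: continuous_measurable_fun (@sqrt_continuous R).
apply: measurable_funD; apply: measurable_sum => i; apply: measurable_funX.
  by apply: measurable_funB; [exact: m11|exact: m21].
by apply: measurable_funB; [exact: m12|exact: m22].
Qed.

Lemma eucl2_ge0 {k : nat} (v : 'rV[R]_k) : 0 <= eucl2 v.
Proof. by apply: sumr_ge0 => i _; exact: sqr_ge0. Qed.

Lemma coord_le_sqrt_eucl2 {k : nat} (v : 'rV[R]_k) (j : 'I_k) (s : R) :
  0 <= s -> `|v ord0 j| <= Num.sqrt (eucl2 v + s).
Proof.
move=> s0; rewrite -sqrtr_sqr; apply: ler_wsqrtr.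
rewrite /eucl2 (bigD1 j) //= -addrA lerDl addr_ge0 //.
by apply: sumr_ge0 => i _; exact: sqr_ge0.
Qed.

Lemma norm_fst_sub_le_edist (z w : Amb R d n) : `|z.1 - w.1| <= Defs.edist z w.
Proof.
apply: rV_norm_le; first exact: edist_ge0.
by move=> j; apply/coord_le_sqrt_eucl2/eucl2_ge0.
Qed.

Lemma snd_coord_sub_le_edist (z w : Amb R d n) (i : 'I_n) :
  `|z.2 ord0 i - w.2 ord0 i| <= Defs.edist z w.
Proof.
rewrite /Defs.edist [eucl2 (z.1 - _) + _]addrC.
by have := coord_le_sqrt_eucl2 (z.2 - w.2) i _ (eucl2_ge0 (z.1 - w.1)); rewrite !mxE.
Qed.

End product_coordinates.

Section bounded_integrals.
Context {R : realType}.

Lemma bounded_integrable {dU} {U : measurableType dU} (P : probability U R)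
    {f : U -> R} {M : R} :
  measurable_fun setT f -> (forall z, `|f z| <= M) ->
  P.-integrable setT (EFin \o f).
Proof.
move=> mf fM; apply: measurable_bounded_integrable => //.
  by rewrite (le_lt_trans (probability_le1 P measurableT)) ?ltry.
by exists M; split; rewrite ?num_real // => x Mx y _; apply: le_trans (fM y) (ltW Mx).
Qed.

Lemma integral_marginal {dT dU} {T : measurableType dT} {U : measurableType dU}
    {P : probability U R} {mu : probability T R} {phi : U -> T} {g : T -> R} {M : R} :
  measurable_fun setT phi -> (forall A, measurable A -> P (phi @^-1` A) = mu A) ->
  measurable_fun setT g -> (forall z, `|g z| <= M) ->
  (\int[mu]_z (g z)%:E = \int[P]_z (g (phi z))%:E)%E.
Proof.
move=> mphi phiE mg gM.
have int_gphi : P.-integrable (phi @^-1` setT) (EFin \o g \o phi).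
  by rewrite preimage_setT; apply: bounded_integrable (fun z => gM (phi z));
    exact: measurableT_comp.
rewrite -[RHS]/(\int[P]_(z in phi @^-1` setT) (EFin \o g \o phi) z)%E.
rewrite -integral_pushforward //; last exact/measurable_EFinP.
by apply: eq_measure_integral => A mA _; apply/esym/phiE.
Qed.

End bounded_integrals.

Section coupling_bound.
Context {R : realType} {dT} {T : measurableType dT}.
Context {mu nu : probability T R} {P : probability (T * T)%type R}.
Hypotheses (P_fst : forall A, measurable A -> P (A `*` setT) = mu A)
  (P_snd : forall B, measurable B -> P (setT `*` B) = nu B).

Lemma coupling_integral_diff_le {c : T * T -> R} {C : R} {g : T -> R} {M a b : R} :
  measurable_fun setT c -> (forall z, 0 <= c z) -> (\int[P]_z (c z)%:E = C%:E)%E ->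
  measurable_fun setT g -> (forall z, `|g z| <= M) ->
  0 <= a -> 0 <= b -> (forall z, `|g z.1 - g z.2| <= a + b * c z) ->
  `|fine (\int[mu]_z (g z)%:E) - fine (\int[nu]_z (g z)%:E)| <= a + b * C.
Proof.
move=> mc c0 P_cost mg gM a0 b0 gc.
have mg1 : measurable_fun setT (fun z : T * T => g z.1) := measurableT_comp mg measurable_fst.
have mg2 : measurable_fun setT (fun z : T * T => g z.2) := measurableT_comp mg measurable_snd.
have mu_fst A : measurable A -> P (fst @^-1` A) = mu A by rewrite -setXT; exact: P_fst.
have nu_snd B : measurable B -> P (snd @^-1` B) = nu B by rewrite -setTX; exact: P_snd.
rewrite (integral_marginal measurable_fst mu_fst mg gM).
rewrite (integral_marginal measurable_snd nu_snd mg gM).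
have int1 := bounded_integrable P mg1 (fun z => gM z.1).
have int2 := bounded_integrable P mg2 (fun z => gM z.2).
have ac_integral : (\int[P]_z ((a + b * c z)%:E) = (a + b * C)%:E)%E.
  under eq_integral do rewrite EFinD EFinM.
  rewrite ge0_integralD //; last 2 first.
  - by move=> z _; rewrite lee_fin mulr_ge0.
  - by apply/measurable_EFinP; exact: measurable_funM.
  rewrite integral_cst // [X in (a%:E * X)%E]probability_setT mule1.
  rewrite ge0_integralZl_EFin //; last 2 first.
  - by move=> z _; rewrite lee_fin.
  - exact/measurable_EFinP.
  by rewrite P_cost -EFinM -EFinD.
have diff_le : (`|\int[P]_z ((g z.1)%:E - (g z.2)%:E)| <= (a + b * C)%:E)%E.
  rewrite -ac_integral; apply: le_trans (le_abse_integral _ _ _) _ => //.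
    by apply/measurable_EFinP; exact: measurable_funB.
  under eq_integral do rewrite -EFinB abse_EFin.
  apply: ge0_le_integral => //.
  - by apply/measurable_EFinP; apply: measurableT_comp => //; exact: measurable_funB.
  - by apply/measurable_EFinP; apply: measurable_funD => //; exact: measurable_funM.
  - by move=> z _; rewrite lee_fin.
rewrite integralB_EFin // in diff_le.
move: diff_le (integrable_fin_num measurableT int1) (integrable_fin_num measurableT int2).
by case: (\int[P]_z _)%E => // r1; case: (\int[P]_z _)%E => // r2 /=; rewrite -EFinB lee_fin.
Qed.

End coupling_bound.

Section compact_support.
Context {R : realType} {V : normedModType R}.
Context {f : V -> R} {K : set V}.
Hypotheses (cptK : compact K) (cf : continuous f) (f0 : forall x, ~ K x -> f x = 0).

Lemma compact_support_bounded : exists2 M, 0 <= M & forall u, `|f u| <= M.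
Proof.
have cfK : compact (f @` K).
  by apply: continuous_compact => //; exact: continuous_subspaceT.
have [M [_ HM]] := compact_bounded cfK.
exists (`|M| + 1) => [|u]; first by rewrite addr_ge0.
have [Ku|nKu] := pselect (K u); last by rewrite f0 // normr0 addr_ge0.
by apply: (HM (`|M| + 1)); [rewrite (le_lt_trans (ler_norm M)) // ltrDl|exists u].
Qed.

Lemma compact_support_unif_continuous (e : R) : 0 < e ->
  exists2 del, 0 < del & forall u v, `|u - v| < del -> `|f u - f v| < e.
Proof.
move=> e0; have e20 : 0 < e / 2 by rewrite divr_gt0.
have near_cover := (compact_near_coveringP K).1 cptK R (0 : R)^'+
   (fun del y => forall z, `|y - z| < del -> `|f y - f z| < e) _.
have {near_cover} : \forall del \near (0 : R)^'+,
    K `<=` (fun y => forall z, `|y - z| < del -> `|f y - f z| < e).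
  apply: near_cover => x Kx.
  have /cvgrPdist_lt/(_ _ e20)/nbhs_ballP [r /= r0 Hr] := cf x.
  have r20 : 0 < r / 2 by rewrite divr_gt0.
  exists (ball x (r / 2), [set del | del < r / 2]) => /=.
    by split; [exact: nbhsx_ballx|exact: nbhs_right_lt].
  move=> [y del] /= [yB dl] z yz.
  have xy : `|x - y| < r / 2 by move: yB; rewrite -ball_normE.
  have fxy : `|f x - f y| < e / 2.
    by apply: Hr; rewrite -ball_normE /= (lt_trans xy) // ltr_pdivrMr // ltr_pMr // ltr1n.
  have fxz : `|f x - f z| < e / 2.
    apply: Hr; rewrite -ball_normE /= (le_lt_trans (ler_distD y _ _)) //.
    by rewrite [r]splitr ltrD // (lt_trans yz).
  by rewrite (le_lt_trans (ler_distD (f x) _ _)) // [e]splitr ltrD // distrC.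
move=> near_del; have [del [del0 Kdel]] := filter_ex (filterI (nbhs_right_gt 0) near_del).
exists del => // u v uv.
have [Ku|nKu] := pselect (K u); first exact: Kdel.
have [Kv|nKv] := pselect (K v); last by rewrite !f0 // subrr normr0.
by rewrite distrC; apply: Kdel => //; rewrite distrC.
Qed.

(* Uniform continuity replaces the Lipschitz bound that a smooth mollifier
   would give: closer than [del], [f] varies by less than [e]; farther, the
   crude bound [2 M] is absorbed by the linear term. *)
Lemma compact_support_near_lipschitz (e : R) : 0 < e ->
  exists2 b, 0 <= b & forall u v, `|f u - f v| <= e + b * `|u - v|.
Proof.
move=> e0; have [M M0 fM] := compact_support_bounded.
have [del del0 fdel] := compact_support_unif_continuous _ e0.
have b0 : 0 <= 2 * M / del by rewrite divr_ge0 ?mulr_ge0 // ltW.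
exists (2 * M / del) => // u v.
have [uv|uv] := ltP `|u - v| del.
  by apply/ltW/(lt_le_trans (fdel _ _ uv)); rewrite lerDl mulr_ge0.
have fuv : `|f u - f v| <= 2 * M.
  by have := ler_normB (f u) (f v); have := fM u; have := fM v; lra.
apply: ler_wpDl; first exact: ltW.
apply: le_trans fuv (le_trans _ (ler_wpM2l b0 uv)).
by rewrite divfK // gt_eqF.
Qed.

End compact_support.

Section clamp.
Context {R : realFieldType}.
Implicit Types L s t : R.

Definition clamp L t : R := Num.max (- L) (Num.min t L).

Lemma clampE L t : 0 <= L ->
  clamp L t = if t < - L then - L else if L < t then L else t.
Proof.
move=> L0; rewrite /clamp.
by case: (leP t L) => tL; case: (leP (- L) t) => h; case: (leP (- L) L) => h';
  case: (ltP t (- L)) => h1; case: (ltP L t) => h2; lra.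
Qed.

Lemma clamp_id L t : - L <= t <= L -> clamp L t = t.
Proof. by move=> /andP[Lt tL]; rewrite /clamp (min_l tL) (max_r Lt). Qed.

Lemma norm_clamp_le L t : 0 <= L -> `|clamp L t| <= L.
Proof.
move=> L0; rewrite clampE // ler_norml.
by case: ltP => h1; [|case: ltP => h2]; apply/andP; split; lra.
Qed.

Lemma clamp_lipschitz L s t : 0 <= L -> `|clamp L s - clamp L t| <= `|s - t|.
Proof.
move=> L0; rewrite !clampE // [X in _ <= X]distrC ler_norml.
have [st|ts] := leP s t.
  rewrite ger0_norm ?subr_ge0 //.
  by do 4?case: ltP => ?; apply/andP; split; lra.
rewrite ltr0_norm ?subr_lt0 //.
by do 4?case: ltP => ?; apply/andP; split; lra.
Qed.

End clamp.

Section Feps_integrand.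
Context {R : realType} {d n : nat}.
Variables (rho : 'rV[R]_d -> R) (L eps : R).
Context {M : R}.
Hypotheses (rho_cont : continuous rho) (rho_bound : forall u, `|rho u| <= M)
  (L0 : 0 <= L).

(* [clamp] agrees with the identity on [X], so the integrals defining [Feps]
   are unchanged, but it makes the integrand bounded and uniformly
   continuous on the whole ambient space, where couplings live. *)
Definition Feps_integrand (x : 'rV[R]_d) (i : 'I_n) (z : Amb R d n) : R :=
  rho (eps^-1 *: (z.1 - x)) * clamp L (z.2 ord0 i).

Lemma measurable_Feps_integrand x i : measurable_fun setT (Feps_integrand x i).
Proof.
have rho_x : continuous (fun z : 'rV[R]_d * 'rV[R]_n => rho (eps^-1 *: (z.1 - x))).
  move=> z; apply: (@continuous_comp _ _ _ (fun z : 'rV[R]_d * 'rV[R]_n => z.1)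
    (fun v : 'rV[R]_d => rho (eps^-1 *: (v - x)))).
    exact: cvg_fst.
  apply: continuous_comp; last exact: rho_cont.
  exact: (cvgZr (cvgB cvg_id (cvg_cst x))).
apply: measurable_funM; first exact: continuous_Amb_measurable rho_x.
apply: measurable_maxr; first exact: measurable_cst.
apply: measurable_minr; last exact: measurable_cst.
exact: continuous_Amb_measurable (continuous_snd_coord i).
Qed.

Lemma Feps_integrand_bounded x i z : `|Feps_integrand x i z| <= M * L.
Proof. by rewrite normrM ler_pM // norm_clamp_le. Qed.

Lemma Feps_integrand_near_lipschitz (a b : R) :
  0 < eps -> 0 <= b -> (forall u v, `|rho u - rho v| <= a + b * `|u - v|) ->
  forall x i (z w : Amb R d n),
  `|Feps_integrand x i z - Feps_integrand x i w| <=
    a * L + (b / eps * L + M) * Defs.edist z w.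
Proof.
move=> eps0 b0 rho_al x i z w; rewrite /Feps_integrand.
set u := eps^-1 *: _; set v := eps^-1 *: _.
set s := clamp L _; set t := clamp L _.
have uv : `|u - v| <= Defs.edist z w / eps.
  have epsV0 : 0 <= eps^-1 by rewrite invr_ge0 ltW.
  rewrite -scalerBr opprB addrA subrK normrZ ger0_norm // mulrC.
  by rewrite ler_wpM2r // norm_fst_sub_le_edist.
have rho_uv : `|rho u - rho v| <= a + b / eps * Defs.edist z w.
  by rewrite (le_trans (rho_al u v)) // lerD2l mulrAC -mulrA ler_wpM2l.
have st : `|s - t| <= Defs.edist z w.
  exact: le_trans (clamp_lipschitz _ _ _ L0) (snd_coord_sub_le_edist _ _ _).
have -> : rho u * s - rho v * t = (rho u - rho v) * s + rho v * (s - t) by ring.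
rewrite (le_trans (ler_normD _ _)) // !normrM.
apply: le_trans (lerD (ler_pM _ _ rho_uv (norm_clamp_le _ _ L0))
                      (ler_pM _ _ (rho_bound v) st)) _ => //.
by rewrite le_eqVlt; apply/orP; left; apply/eqP; ring.
Qed.

Lemma Rintegral_Xset_Feps (Om : set 'rV[R]_d) (mu : probability (Amb R d n) R) x i :
  mu (~` Xset n Om L) = 0%E ->
  Rintegral mu (Xset n Om L) (fun z => rho (eps^-1 *: (z.1 - x)) * z.2 ord0 i) =
  fine (\int[mu]_z (Feps_integrand x i z)%:E)%E.
Proof.
move=> muX; rewrite /Rintegral; congr fine.
rewrite (eq_integral (fun z => (Feps_integrand x i z)%:E)); last first.
  by move=> z; rewrite inE => -[_ zL]; rewrite /Feps_integrand clamp_id.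
have int_F := bounded_integrable mu (measurable_Feps_integrand x i) (Feps_integrand_bounded x i).
rewrite [RHS](negligible_integral (N := ~` Xset n Om L) _ measurableT int_F muX).
  by rewrite setTD setCK.
apply: measurableC; exact: measurable_Xset.
Qed.

End Feps_integrand.

Section Feps_W1_continuity.
Context {R : realType} {d n : nat} {lam : {measure set (BorelT 'rV[R]_d) -> \bar R}}
  {rho : 'rV[R]_d -> R} {Om : set 'rV[R]_d} {L eps : R}.
Hypotheses (rho_moll : mollifier lam rho) (L_gt0 : 0 < L) (eps_gt0 : 0 < eps).

Lemma Feps_coord_diff_le_coupling (a : R) : 0 < a ->
  exists2 B, 0 <= B & forall (mu nu : PX n Om L) pi c,
    coupling (sval mu) (sval nu) pi ->
    (\int[pi]_z (Defs.edist z.1 z.2)%:E)%E = c%:E -> forall x j,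
    `|(Feps lam Om L rho eps (sval mu) x - Feps lam Om L rho eps (sval nu) x) ord0 j|
      <= `|fine (lam Om) / eps ^+ d| * (a + B * c).
Proof.
move=> a0; have L0 := ltW L_gt0; have [rho_smooth [cptK _]] := rho_moll.
have rho_cont : continuous rho := (rho_smooth [::]).1.
have rho0 u : ~ closure [set x | rho x != 0] u -> rho u = 0.
  by move=> Ku; apply/eqP/negPn/negP => rho_u; apply/Ku/subset_closure.
have [M M0 rhoM] := compact_support_bounded cptK rho_cont rho0.
have [b b0 rho_al] := compact_support_near_lipschitz cptK rho_cont rho0 _ (divr_gt0 a0 L_gt0).
have B0 : 0 <= b / eps * L + M by rewrite addr_ge0 // mulr_ge0 ?divr_ge0 // ltW.
exists (b / eps * L + M) => // mu nu pi c [pi_fst pi_snd] cost x j.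
rewrite !mxE.
rewrite (Rintegral_Xset_Feps rho L eps rho_cont rhoM L0 Om _ x j (svalP mu)).
rewrite (Rintegral_Xset_Feps rho L eps rho_cont rhoM L0 Om _ x j (svalP nu)).
rewrite -mulrBr normrM ler_wpM2l // -[X in _ <= X + _](@divfK _ L) ?gt_eqF //.
apply: (coupling_integral_diff_le pi_fst pi_snd measurable_edist _ cost
  (measurable_Feps_integrand rho L eps rho_cont x j)
  (Feps_integrand_bounded rho L eps rhoM L0 x j)) => //.
- by move=> z; exact: sqrtr_ge0.
- by rewrite divfK ?gt_eqF // ltW.
- move=> z; have := Feps_integrand_near_lipschitz rho L eps rhoM L0 _ _
    eps_gt0 b0 rho_al x j z.1 z.2; exact.
Qed.

Lemma Feps_W1_uniform_continuous (e : R) : 0 < e ->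
  exists2 t, 0 < t & forall mu nu : PX n Om L, (W1 (sval mu) (sval nu) < t%:E)%E ->
    forall x, `|Feps lam Om L rho eps (sval mu) x - Feps lam Om L rho eps (sval nu) x| < e.
Proof.
move=> e0; set C := `|fine (lam Om) / eps ^+ d| + 1.
have C0 : 0 < C by rewrite ltr_pwDr.
set X := e / (2 * C).
have X0 : 0 < X by rewrite divr_gt0 ?mulr_gt0.
have eX : e = C * (2 * X) by rewrite /X; field; rewrite gt_eqF.
have [B B0 Feps_le] := Feps_coord_diff_le_coupling _ X0.
set t := X / (B + 1).
have t0 : 0 < t by rewrite divr_gt0 // ltr_pwDr.
have Bt : B * t + t = X by rewrite /t; field; rewrite gt_eqF // ltr_pwDr.
exists t => // mu nu /ereal_inf_lt[_ [pi [pi_cpl ->]] cost_lt] x.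
have : (0 <= \int[pi]_z (Defs.edist z.1 z.2)%:E)%E.
  by apply: integral_ge0 => z _; rewrite lee_fin sqrtr_ge0.
move: cost_lt; case cost: (\int[pi]_z _)%E => [c| |] // ct c0.
rewrite lte_fin in ct; rewrite lee_fin in c0.
apply: rV_norm_lt => // j.
apply: le_lt_trans (Feps_le _ _ _ _ pi_cpl cost x j) _.
have Bc : X + B * c < 2 * X by have := ler_wpM2l B0 (ltW ct); lra.
have kC : `|fine (lam Om) / eps ^+ d| <= C by rewrite lerDl.
have Xc0 : 0 <= X + B * c by apply: addr_ge0; [exact: ltW|exact: mulr_ge0].
by rewrite eX (le_lt_trans (ler_wpM2r Xc0 kC)) // ltr_pM2l.
Qed.

Lemma Feps_cvg_of_W1_cvg {I : Type} {F : set_system I} {FF : Filter F}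
    {mus : I -> PX n Om L} {mu : PX n Om L} :
  (fun k => W1 (sval (mus k)) (sval mu)) @ F --> 0%E ->
  forall e, 0 < e -> \forall k \near F, forall x,
    `|Feps lam Om L rho eps (sval (mus k)) x - Feps lam Om L rho eps (sval mu) x| < e.
Proof.
move=> W1_cvg e e0; have [t t0 Feps_t] := Feps_W1_uniform_continuous _ e0.
have lt_t : nbhs (0%R)%:E [set y | (y < t%:E)%E] := nbhs_open_ereal_lt t0.
have W1_lt : \forall k \near F, (W1 (sval (mus k)) (sval mu) < t%:E)%E := W1_cvg _ lt_t.
by apply: filterS W1_lt => k /Feps_t.
Qed.

End Feps_W1_continuity.

Theorem propositionF1 (R : realType) (d n : nat)
  (lam : {measure set (BorelT 'rV[R]_d) -> \bar R}) (Hlam : is_lebesgue lam)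
  (rho : 'rV[R]_d -> R) (Hrho : mollifier lam rho)
  (Om : set 'rV[R]_d) (HOmo : open Om) (HOmb : bounded_set Om)
  (L : R) (HL : 0 < L) (HN : (0 < n)%N)
  (eps : R) (Heps : 0 < eps)
  (N : nat) (HN0 : (0 < N)%N)
  (xbar : 'I_N -> 'rV[R]_d) (Hxbar : forall j, Om (xbar j))
  (h : 'rV[R]_d -> 'rV[R]_n)
  (Hhc : {within closure Om, continuous h})
  (Hhb : forall x, closure Om x -> forall i, - L <= h x ord0 i <= L)
  (Mh : PX n Om L) (HMh : is_empirical xbar h (sval Mh)) :
  (forall (Gs : nat -> PX n Om L -> PX n Om L) (G : PX n Om L -> PX n Om L),
     (forall mu, (fun k => W1 (sval (Gs k mu)) (sval (G mu))) @ \oo --> 0%E) ->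
     forall e : R, 0 < e -> \forall k \near \oo, forall x, closure Om x ->
       `| Feps lam Om L rho eps (sval (Gs k Mh)) x
          - Feps lam Om L rho eps (sval (G Mh)) x | < e)
  /\
  (forall (Ge : R -> PX n Om L -> PX n Om L) (G : PX n Om L -> PX n Om L),
     (forall mu, (fun eta => W1 (sval (Ge eta mu)) (sval (G mu)))
                   @ 0^'+ --> 0%E) ->
     forall e : R, 0 < e -> \forall eta \near 0^'+, forall x, closure Om x ->
       `| Feps lam Om L rho eps (sval (Ge eta Mh)) x
          - Feps lam Om L rho eps (sval (G Mh)) x | < e).
Proof.
split=> [Gs|Ge] G G_cvg e e0.
  by apply: filterS (Feps_cvg_of_W1_cvg Hrho HL Heps (G_cvg Mh) _ e0) => k + x _; apply.
by apply: filterS (Feps_cvg_of_W1_cvg Hrho HL Heps (G_cvg Mh) _ e0) => eta + x _; apply.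
Qed.
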